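(* Let $A_2\in\mathbf{C}^{n\times n}$, let $C_2\in\mathbf{C}^{p\times n}$ be any matrix such that the discrete-time antilinear system $x(t+1)=A_2^{\#}x(t)^{\#}$, $y(t)=C_2^{\#}x(t)^{\#}$ is observable, and let $C_N\in\mathbf{C}^{q\times n}$ be such that the pair $(A_2^{\#}A_2,C_N)$ is observable. Then the following are equivalent: (1) the antilinear system $x(t+1)=A_2^{\#}x(t)^{\#}$, $t\in\mathbf{Z}^+$, is asymptotically stable; (2) there exists a unique positive definite matrix $P_1\in\mathbf{C}^{n\times n}$ such that $A_2^{\mathrm H}P_1^{\#}A_2-P_1=-C_2^{\mathrm H}C_2$; (3) there exists a unique positive definite matrix $P_N\in\mathbf{C}^{n\times n}$ such that $(A_2^{\#}A_2)^{\mathrm H}P_N(A_2^{\#}A_2)-P_N=-C_N^{\mathrm H}C_N$. Moreover, if the system is asymptotically stable, then $(C_2,P_1)$ satisfies $A_2^{\mathrm H}P_1^{\#}A_2-P_1=-C_2^{\mathrm H}C_2$ if and only if $(C_N,P_N)=\left(\begin{bmatrix}C_2\\ C_2^{\#}A_2\end{bmatrix},P_1\right)$ satisfies $(A_2^{\#}A_2)^{\mathrm H}P_N(A_2^{\#}A_2)-P_N=-C_N^{\mathrm H}C_N$.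
   Context: $P^{\#}$, $P^{\mathrm H}$: entrywise conjugate, conjugate transpose. A positive definite matrix means a Hermitian positive definite matrix. Observability of the antilinear system means observability of its real representation $\vec x(t+1)=\{0,A_2\}_\circ\vec x(t)$, $\vec y=\{0,C_2\}_\circ\vec x$, where for matrices $A_1,A_2$ of equal size $\{A_1,A_2\}_\circ=\begin{bmatrix}\mathrm{Re}(A_1+A_2) & -\mathrm{Im}(A_1+A_2)\\ \mathrm{Im}(A_1-A_2) & \mathrm{Re}(A_1-A_2)\end{bmatrix}$ and $\vec z=[\mathrm{Re}(z)^{\mathrm T},\mathrm{Im}(z)^{\mathrm T}]^{\mathrm T}$. Asymptotic stability is in the Lyapunov sense (stable and all solutions tend to $0$). *)

From HB Require Import structures.
From mathcomp Require Import all_boot all_order all_algebra.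
From mathcomp Require Import reals complex.
Set Implicit Arguments. Unset Strict Implicit. Unset Printing Implicit Defensive.
Import Order.TTheory GRing.Theory Num.Theory.
Local Open Scope ring_scope.

Section Defs.
Variable R : realType.
Local Notation C := R[i].

Definition conjm m n (P : 'M[C]_(m, n)) : 'M[C]_(m, n) := map_mx (@conjc R) P.
Definition hermt m n (P : 'M[C]_(m, n)) : 'M[C]_(n, m) := (conjm P)^T.

Definition reM m n (P : 'M[C]_(m, n)) : 'M[R]_(m, n) := map_mx (@complex.Re R) P.
Definition imM m n (P : 'M[C]_(m, n)) : 'M[R]_(m, n) := map_mx (@complex.Im R) P.

Definition realrep m n (A1 A2 : 'M[C]_(m, n)) : 'M[R]_(m + m, n + n) :=
  block_mx (reM (A1 + A2)) (- imM (A1 + A2)) (imM (A1 - A2)) (reM (A1 - A2)).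

Definition posdef n (P : 'M[C]_n) : Prop :=
  hermt P = P /\
  forall x : 'cV[C]_n, x != 0 -> 0 < (hermt x *m P *m x) 0 0.

Definition observable (K : nzRingType) n p (A : 'M[K]_n) (Cm : 'M[K]_(p, n)) :=
  forall x0 : 'cV[K]_n, (forall t : nat, Cm *m (A ^+ t) *m x0 = 0) -> x0 = 0.

(* observability of the antilinear system x(t+1)=A2^# x(t)^#, y=C2^# x(t)^#:
   observability of its real representation *)
Definition antilin_observable n p (A2 : 'M[C]_n) (C2 : 'M[C]_(p, n)) :=
  observable (realrep 0 A2) (realrep 0 C2).

Fixpoint antilin_traj n (A2 : 'M[C]_n) (x0 : 'cV[C]_n) (t : nat) : 'cV[C]_n :=
  match t with
  | 0 => x0
  | t'.+1 => conjm A2 *m conjm (antilin_traj A2 x0 t')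
  end.

(* asymptotic stability (Lyapunov): stable and every solution tends to 0;
   the (max-entry) norm on C^n is used *)
Definition antilin_asym_stable n (A2 : 'M[C]_n) : Prop :=
  (forall e : R, 0 < e -> exists2 d : R, 0 < d &
     forall x0 : 'cV[C]_n, (forall i, `|x0 i 0| < d%:C%C) ->
       forall t i, `|antilin_traj A2 x0 t i 0| < e%:C%C) /\
  (forall x0 : 'cV[C]_n, forall e : R, 0 < e -> exists T : nat,
     forall t, (T <= t)%N -> forall i, `|antilin_traj A2 x0 t i 0| < e%:C%C).

End Defs.

(* With M := A2^# A2, the antilinear trajectory equals M^k x0 at time 2k and
   A2^# (M^k x0)^# at time 2k+1, so the antilinear system is asymptotically
   stable iff the linear system x |-> M x is (uniformly bounded and)
   attractive.  For attractive M the Stein map X |-> M^H X M - X is injective,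
   since a fixed point X = (M^k)^H X M^k is squeezed to 0, hence bijective; its
   solution is Hermitian, and the telescoping identity
   x^H P x = sum_(j < K) |CN M^j x|^2 + (M^K x)^H P (M^K x) together with
   observability makes it positive definite.  Conversely the same identity
   bounds the output energy of a positive definite solution, and observability
   over the finite horizon given by the minimal polynomial of M turns output
   bounds into state bounds.  Finally, with f X := A2^H X^# A2 and
   G := C2^H C2, the second Stein map is f (f X - X) + (f X - X) and the Gram
   matrix of [C2; C2^# A2] is G + f G, so solutions of the first equation solve
   the second; conversely the defect E of the first equation satisfies
   f E = - E, hence is a fixed point of the Stein map of M and vanishes. *)

From HB Require Import structures.
From mathcomp Require Import all_boot all_order all_algebra.
From mathcomp Require Import boolp reals complex.
From mathcomp Require Import ring lra.
Set Implicit Arguments. Unset Strict Implicit. Unset Printing Implicit Defensive.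
Import Order.TTheory GRing.Theory Num.Theory.
Local Open Scope ring_scope.
Local Open Scope complex_scope.

Section Conjugation.
Variable R : realType.
Local Notation C := R[i].

Lemma conjm_is_zmod_morphism m n : zmod_morphism (@conjm R m n).
Proof. by move=> A B; rewrite /conjm map_mxB. Qed.
HB.instance Definition _ m n :=
  GRing.isZmodMorphism.Build _ _ (@conjm R m n) (@conjm_is_zmod_morphism m n).

Lemma hermt_is_zmod_morphism m n : zmod_morphism (@hermt R m n).
Proof. by move=> A B; rewrite /hermt raddfB linearB. Qed.
HB.instance Definition _ m n :=
  GRing.isZmodMorphism.Build _ _ (@hermt R m n) (@hermt_is_zmod_morphism m n).

Lemma conjmM m n p (A : 'M[C]_(m, n)) (B : 'M[C]_(n, p)) :
  conjm (A *m B) = conjm A *m conjm B.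
Proof. exact: map_mxM. Qed.

Lemma conjmK m n : involutive (@conjm R m n).
Proof. by move=> A; apply/matrixP => i j; rewrite !mxE conjcK. Qed.

Lemma conjm_hermt m n (A : 'M[C]_(m, n)) : conjm (hermt A) = hermt (conjm A).
Proof. by apply/matrixP => i j; rewrite !mxE. Qed.

Lemma hermtM m n p (A : 'M[C]_(m, n)) (B : 'M[C]_(n, p)) :
  hermt (A *m B) = hermt B *m hermt A.
Proof. by rewrite /hermt conjmM trmx_mul. Qed.

Lemma hermtK m n (A : 'M[C]_(m, n)) : hermt (hermt A) = A.
Proof. by apply/matrixP => i j; rewrite !mxE conjcK. Qed.

Lemma hermt1 m : hermt (1 : 'M[C]_m) = 1.
Proof. by rewrite /hermt /conjm map_mx1 trmx1. Qed.

Lemma hermt_delta m (i : 'I_m) : hermt (delta_mx i 0 : 'cV[C]_m) = delta_mx 0 i.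
Proof. by apply/matrixP => a b; rewrite !mxE andbC conjc_nat. Qed.

Lemma hermt_col_mul m1 m2 n (A : 'M[C]_(m1, n)) (B : 'M[C]_(m2, n)) :
  hermt (col_mx A B) *m col_mx A B = hermt A *m A + hermt B *m B.
Proof. by rewrite /hermt /conjm map_col_mx tr_col_mx mul_row_col. Qed.

End Conjugation.

Section Norms.
Variable R : realType.
Local Notation C := R[i].
Local Notation normc := (@Normc.normc R).

Lemma norm_normc (z : C) : `|z| = (normc z)%:C.
Proof. by []. Qed.

Lemma normc_ge0 (z : C) : 0 <= normc z.
Proof. by case: z => a b; rewrite /Normc.normc sqrtr_ge0. Qed.

Lemma normc_gt0 (z : C) : z != 0 -> 0 < normc z.
Proof.
by move=> z0; rewrite lt_def normc_ge0 andbT; apply: contraNneq z0 => /Normc.eq0_normc ->.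
Qed.

Lemma normc_sum (I : finType) (F : I -> C) : normc (\sum_i F i) <= \sum_i normc (F i).
Proof.
elim/big_ind2: _ => [|x1 x2 y1 y2 h1 h2|//]; first by rewrite Normc.normc0.
by apply: le_trans (le_normcD _ _) _; apply: lerD.
Qed.

Lemma Re_le_normc (z : C) : `|complex.Re z| <= normc z.
Proof. by rewrite -lecR; apply: normc_ge_Re. Qed.

Definition mxnorm m n (A : 'M[C]_(m, n)) : R := \sum_i \sum_j normc (A i j).

Lemma mxnorm_ge0 m n (A : 'M[C]_(m, n)) : 0 <= mxnorm A.
Proof. by do 2!apply: sumr_ge0 => ? _; apply: normc_ge0. Qed.

Lemma mxnorm_row m n (A : 'M[C]_(m, n)) i : \sum_j normc (A i j) <= mxnorm A.
Proof.
by rewrite /mxnorm (bigD1 i) //= lerDl; do 2!apply: sumr_ge0 => ? _; apply: normc_ge0.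
Qed.

Lemma mxnorm_entry m n (A : 'M[C]_(m, n)) i j : normc (A i j) <= mxnorm A.
Proof.
apply: le_trans (mxnorm_row A i); rewrite (bigD1 j) //= lerDl.
by apply: sumr_ge0 => ? _; apply: normc_ge0.
Qed.

Lemma mxnorm_cV m (x : 'cV[C]_m) : mxnorm x = \sum_i normc (x i 0).
Proof. by apply: eq_bigr => i _; rewrite big_ord1. Qed.

Lemma mxnormD m n (A B : 'M[C]_(m, n)) : mxnorm (A + B) <= mxnorm A + mxnorm B.
Proof.
rewrite /mxnorm -big_split; apply: ler_sum => i _.
by rewrite -big_split; apply: ler_sum => j _; rewrite mxE le_normcD.
Qed.

Lemma mxnorm_sum m n (I : finType) (F : I -> 'M[C]_(m, n)) :
  mxnorm (\sum_i F i) <= \sum_i mxnorm (F i).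
Proof.
apply: (big_ind2 (fun A r => mxnorm A <= r)) => [|A1 r1 A2 r2 h1 h2|//].
  by rewrite /mxnorm big1 // => i _; rewrite big1 // => j _; rewrite mxE Normc.normc0.
by apply: le_trans (mxnormD _ _) _; apply: lerD.
Qed.

Lemma mxnorm_conjm m n (A : 'M[C]_(m, n)) : mxnorm (conjm A) = mxnorm A.
Proof.
apply: eq_bigr => i _; apply: eq_bigr => j _.
by rewrite !mxE; case: (A i j) => a b; rewrite /Normc.normc /= sqrrN.
Qed.

Lemma mxnorm_hermt m n (A : 'M[C]_(m, n)) : mxnorm (hermt A) = mxnorm A.
Proof.
rewrite -[RHS]mxnorm_conjm /mxnorm exchange_big.
by apply: eq_bigr => i _; apply: eq_bigr => j _; rewrite mxE.
Qed.

Lemma mxnormM m n p (A : 'M[C]_(m, n)) (B : 'M[C]_(n, p)) :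
  mxnorm (A *m B) <= mxnorm A * mxnorm B.
Proof.
rewrite /mxnorm mulr_suml; apply: ler_sum => i _.
apply: (@le_trans _ _ (\sum_j \sum_k normc (A i k) * normc (B k j))).
  apply: ler_sum => j _; rewrite mxE; apply: le_trans (normc_sum _) _.
  by apply: ler_sum => k _; rewrite Normc.normcM.
rewrite exchange_big /= mulr_suml; apply: ler_sum => k _.
by rewrite -mulr_sumr ler_wpM2l ?normc_ge0 ?mxnorm_row.
Qed.

Lemma mxnormM3 m n p r (A : 'M[C]_(m, n)) (B : 'M[C]_(n, p)) (D : 'M[C]_(p, r)) :
  mxnorm (A *m B *m D) <= mxnorm A * mxnorm B * mxnorm D.
Proof. by apply: le_trans (mxnormM _ _) _; rewrite ler_wpM2r ?mxnorm_ge0 ?mxnormM. Qed.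

Lemma mxnorm_cV_le m (x : 'cV[C]_m) (r : R) :
  (forall i, normc (x i 0) <= r) -> mxnorm x <= m%:R * r.
Proof.
move=> xr; rewrite mxnorm_cV.
by apply: le_trans (ler_sum _ (fun i _ => xr i)) _; rewrite sumr_const card_ord mulr_natl.
Qed.

Definition sqnorm m (x : 'cV[C]_m) : R := \sum_i normc (x i 0) ^+ 2.

Lemma sqnorm_ge0 m (x : 'cV[C]_m) : 0 <= sqnorm x.
Proof. by apply: sumr_ge0 => i _; rewrite exprn_ge0 ?normc_ge0. Qed.

Lemma sqnorm_entry m (x : 'cV[C]_m) i : normc (x i 0) ^+ 2 <= sqnorm x.
Proof.
rewrite /sqnorm (bigD1 i) //= lerDl.
by apply: sumr_ge0 => j _; rewrite exprn_ge0 ?normc_ge0.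
Qed.

Lemma sqnorm_gt0 m (x : 'cV[C]_m) : x != 0 -> 0 < sqnorm x.
Proof.
case/matrix0Pn => i [j xij]; rewrite ord1 in xij.
by apply: lt_le_trans (sqnorm_entry x i); rewrite exprn_gt0 ?normc_gt0.
Qed.

Lemma sqnorm_eq0 m (x : 'cV[C]_m) : sqnorm x = 0 -> x = 0.
Proof. by move=> x0; apply/eqP; apply: contraNT (@sqnorm_gt0 m x) _; rewrite x0 ltxx. Qed.

Lemma mxnorm_le_of_sqnorm m (x : 'cV[C]_m) (r : R) :
  0 <= r -> sqnorm x <= r ^+ 2 -> mxnorm x <= m%:R * r.
Proof.
move=> r0 xr; apply: mxnorm_cV_le => i.
by rewrite -(ler_pXn2r (_ : 0 < 2)%N) ?nnegrE ?normc_ge0 // (le_trans (sqnorm_entry x i)).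
Qed.

Definition qform m (P : 'M[C]_m) (x : 'cV[C]_m) : C := (hermt x *m P *m x) 0 0.

Lemma qform1 m (x : 'cV[C]_m) : qform 1 x = (sqnorm x)%:C.
Proof.
rewrite /qform mulmx1 mxE /sqnorm rmorph_sum; apply: eq_bigr => i _.
by rewrite rmorphXn /= -norm_normc sqr_normc !mxE mulrC.
Qed.

Lemma normc_qform_le m (P : 'M[C]_m) (x : 'cV[C]_m) :
  normc (qform P x) <= mxnorm x ^+ 2 * mxnorm P.
Proof.
apply: le_trans (mxnorm_entry _ 0 0) _; apply: le_trans (mxnormM3 _ _ _) _.
by rewrite mxnorm_hermt expr2 mulrAC.
Qed.

End Norms.

Section Vanishing.
Variable R : realType.

(* For nonnegative [u] this is convergence to 0. *)
Definition vanishing (u : nat -> R) :=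
  forall e, 0 < e -> exists T, forall t, (T <= t)%N -> u t < e.

Lemma vanishing_le (u v : nat -> R) :
  (forall t, u t <= v t) -> vanishing v -> vanishing u.
Proof.
move=> uv hv e e0; have [T hT] := hv e e0.
by exists T => t tT; apply: le_lt_trans (uv t) (hT t tT).
Qed.

Lemma vanishingZ (c : R) (u : nat -> R) :
  0 <= c -> vanishing u -> vanishing (fun t => c * u t).
Proof.
move=> c0 hu e e0; have e'0 : 0 < e / (c + 1) by rewrite divr_gt0 // ltr_wpDl.
have [T hT] := hu _ e'0; exists T => t /hT ut.
have ce : c * (e / (c + 1)) < e.
  by rewrite mulrA ltr_pdivrMr ?ltr_wpDl //; nra.
by apply: le_lt_trans ce; rewrite ler_wpM2l // ltW.
Qed.

Lemma vanishingD (u v : nat -> R) :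
  vanishing u -> vanishing v -> vanishing (fun t => u t + v t).
Proof.
move=> hu hv e e0; have e2 : 0 < e / 2 by rewrite divr_gt0.
have [[T1 h1] [T2 h2]] := (hu _ e2, hv _ e2).
exists (maxn T1 T2) => t; rewrite geq_max => /andP[/h1 ut /h2 vt].
by rewrite [e]splitr ltrD.
Qed.

Lemma vanishing_sum d (u : nat -> nat -> R) :
  (forall j, (j < d)%N -> vanishing (u j)) -> vanishing (fun t => \sum_(j < d) u j t).
Proof.
elim: d => [_ e e0|d IH hu]; first by exists 0%N => t _; rewrite big_ord0.
under [fun t => _]funext => t do rewrite big_ord_recr.
by apply: vanishingD; [apply: IH => j /ltnW/hu | apply: hu].
Qed.

Lemma vanishingM (u v : nat -> R) : (forall t, 0 <= u t) ->
  vanishing u -> vanishing v -> vanishing (fun t => u t * v t).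
Proof.
move=> u0 hu hv e e0; have [[T1 h1] [T2 h2]] := (hu _ ltr01, hv _ e0).
exists (maxn T1 T2) => t; rewrite geq_max => /andP[/h1 ut /h2 vt].
have := u0 t; nra.
Qed.

Lemma vanishing_shift j (u : nat -> R) : vanishing u -> vanishing (fun t => u (j + t)).
Proof.
by move=> hu e /hu[T hT]; exists T => t tT; apply: hT; rewrite (leq_trans tT) ?leq_addl.
Qed.

Lemma vanishing_cst (c : R) : vanishing (fun=> c) -> c <= 0.
Proof.
move=> hc; rewrite leNgt; apply/negP => c0.
by have [T /(_ T (leqnn T))] := hc c c0; rewrite ltxx.
Qed.

Lemma vanishing_series (a : nat -> R) (B : R) : (forall j, 0 <= a j) ->
  (forall K, \sum_(j < K) a j <= B) -> vanishing a.
Proof.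
move=> a0 aB e e0; apply: contrapT => not_ev.
have often T : exists2 t, (T <= t)%N & e <= a t.
  apply: contrapT => hT; apply: not_ev; exists T => t tT.
  by rewrite ltNge; apply/negP => eat; apply: hT; exists t.
have grow N : exists K, N%:R * e <= \sum_(j < K) a j.
  elim: N => [|N [K hK]]; first by exists 0%N; rewrite mul0r big_ord0.
  have [t tK et] := often K; exists t.+1.
  rewrite big_ord_recr /= -nat1r mulrDl mul1r addrC lerD //.
  apply: le_trans hK _; rewrite -!(big_mkord xpredT) (big_cat_nat (leq0n K) tK) /=.
  by rewrite lerDl sumr_ge0.
have [K hK] := grow (Num.bound (`|B| / e)).
have := archi_boundP (divr_ge0 (normr_ge0 B) (ltW e0)).
rewrite ltr_pdivrMr // => Bbound.
have := aB K; have := ler_norm B; lra.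
Qed.

Lemma vanishing_mxnorm m (z : nat -> 'cV[R[i]]_m) :
  vanishing (fun t => sqnorm (z t)) -> vanishing (fun t => mxnorm (z t)).
Proof.
move=> hz e e0; have r0 : 0 < e / (m%:R + 1) by rewrite divr_gt0 ?ltr_wpDl.
have [T hT] := hz _ (exprn_gt0 2 r0); exists T.
move=> t /hT /ltW /(mxnorm_le_of_sqnorm (ltW r0)).
move/le_lt_trans; apply; rewrite mulrA ltr_pdivrMr ?ltr_wpDl //; nra.
Qed.

End Vanishing.

Section FieldMatrices.
Variable K : fieldType.

Lemma unitmx_of_row_inj m (B : 'M[K]_m) :
  (forall u : 'rV[K]_m, u *m B = 0 -> u = 0) -> B \in unitmx.
Proof.
move=> inj; rewrite -row_free_unit -kermx_eq0; apply/eqP/row_matrixP => i.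
by rewrite row0; apply: inj; rewrite -row_mul mulmx_ker row0.
Qed.

Lemma observable_horizon n p (M : 'M[K]_n) (Cm : 'M[K]_(p, n)) :
  exists d, forall y : 'cV[K]_n,
  (forall j, (j < d)%N -> Cm *m M ^+ j *m y = 0) -> forall t, Cm *m M ^+ t *m y = 0.
Proof.
case: n M Cm => [|n] M Cm; first by exists 0%N => y _ t; rewrite [y]flatmx0 mulmx0.
exists (degree_mxminpoly M) => y y0 t.
have /submxP[u Mt] : (mxvec (M ^+ t) <= powers_mx M (degree_mxminpoly M))%MS.
  by have := horner_mx_mem M ('X ^+ t); rewrite rmorphXn /= horner_mx_X.
have -> : M ^+ t = \sum_(i < degree_mxminpoly M) u 0 i *: M ^+ i.
  apply: (can_inj mxvecK); rewrite Mt mulmx_sum_row linear_sum.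
  by apply: eq_bigr => i _; rewrite linearZ rowK.
rewrite mulmx_sumr mulmx_suml big1 // => i _.
by rewrite -scalemxAr -scalemxAl y0 // scaler0.
Qed.

End FieldMatrices.

Section Stein.
Variables (R : realType) (n : nat).
Local Notation C := R[i].
Implicit Types (M P X : 'M[C]_n) (x : 'cV[C]_n).

Definition attractive M := forall x, vanishing (fun k => mxnorm (M ^+ k *m x)).

Definition stein M X := hermt M *m X *m M - X.

Lemma stein_is_linear M : linear (stein M).
Proof.
move=> a X Y; rewrite /stein mulmxDr mulmxDl -scalemxAr -scalemxAl.
by rewrite opprD scalerBr addrACA.
Qed.
HB.instance Definition _ M :=
  GRing.isLinear.Build C 'M[C]_n 'M[C]_n _ (stein M) (stein_is_linear M).

Lemma stein_hermt M X : stein M (hermt X) = hermt (stein M X).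
Proof. by rewrite /stein raddfB /= !hermtM hermtK mulmxA. Qed.

Lemma stein_surj M :
  (forall X, stein M X = 0 -> X = 0) -> forall Q, exists P, stein M P = Q.
Proof.
move=> inj Q; have unitL : lin_mx (stein M) \in unitmx.
  apply: unitmx_of_row_inj => u uL0; rewrite -(vec_mxK u) (inj (vec_mx u)) ?linear0 //.
  by apply/eqP; rewrite -mxvec_eq0 -mul_rV_lin uL0.
exists (vec_mx (mxvec Q *m invmx (lin_mx (stein M)))).
by apply: (can_inj mxvecK); rewrite -mul_vec_lin vec_mxK mulmxKV.
Qed.

Lemma attractive_stein_eq0 M X : attractive M -> stein M X = 0 -> X = 0.
Proof.
move=> attrM /eqP; rewrite subr_eq0 => /eqP fixX.
have powX k : X = hermt (M ^+ k) *m X *m M ^+ k.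
  elim: k => [|k IHk]; first by rewrite expr0 hermt1 mul1mx mulmx1.
  by rewrite {1}IHk -{1}fixX exprS -mulmxE hermtM !mulmxA.
apply/matrixP => i j; rewrite mxE; apply/Normc.eq0_normc/le_anti.
rewrite normc_ge0 andbT; apply: vanishing_cst.
pose v k (l : 'I_n) := M ^+ k *m (delta_mx l 0 : 'cV[C]_n).
have entry k : X i j = (hermt (v k i) *m X *m v k j) 0 0.
  rewrite hermtM hermt_delta !mulmxA -(mulmxA _ (hermt _)) -(mulmxA (delta_mx 0 i)).
  by rewrite -powX -rowE -colE !mxE.
apply: (@vanishing_le _ _ (fun k => mxnorm (v k i) * mxnorm X * mxnorm (v k j))).
  move=> k; rewrite (entry k) -(mxnorm_hermt (v k i)).
  exact: le_trans (mxnorm_entry _ 0 0) (mxnormM3 _ _ _).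
under [fun k => _]funext => k do rewrite -mulrA.
apply: vanishingM => [k||]; [exact: mxnorm_ge0 | exact: attrM |].
by apply: vanishingZ; [exact: mxnorm_ge0 | exact: attrM].
Qed.

End Stein.

Section Lyapunov.
Variables (R : realType) (n q : nat) (M : 'M[R[i]]_n) (CN : 'M[R[i]]_(q, n)).
Local Notation C := R[i].
Implicit Types (P : 'M[C]_n) (x : 'cV[C]_n).

Lemma qform_hermt P x : qform (hermt P) x = (qform P x)^*.
Proof.
rewrite /qform; have -> : hermt x *m hermt P *m x = hermt (hermt x *m P *m x).
  by rewrite !hermtM hermtK mulmxA.
by rewrite !mxE.
Qed.

Lemma qform_step P x : stein M P = - (hermt CN *m CN) ->
  qform P x = (sqnorm (CN *m x))%:C + qform P (M *m x).
Proof.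
move/eqP; rewrite subr_eq addrC -subr_eq opprK => /eqP sP.
rewrite -qform1 /qform mulmx1 -[in LHS]sP mulmxDr mulmxDl mxE addrC.
by rewrite !hermtM !mulmxA.
Qed.

Lemma qform_telescope P x K : stein M P = - (hermt CN *m CN) ->
  qform P x = (\sum_(j < K) sqnorm (CN *m M ^+ j *m x))%:C + qform P (M ^+ K *m x).
Proof.
move=> sP; elim: K => [|K IHK]; first by rewrite big_ord0 add0r expr0 mul1mx.
rewrite IHK big_ord_recr rmorphD -addrA (qform_step _ sP).
by rewrite exprS -mulmxE !mulmxA.
Qed.

Lemma Im_qform P x : hermt P = P -> complex.Im (qform P x) = 0.
Proof.
move=> hP; have := qform_hermt P x; rewrite hP.
by case: (qform P x) => a b /= [] /eqP; rewrite -subr_eq0 opprK -mulr2n mulrn_eq0 => /eqP.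
Qed.

Lemma posdef_Re_qform_ge0 P x : posdef P -> 0 <= complex.Re (qform P x).
Proof.
case=> _ pdP; have [->|x0] := eqVneq x 0; first by rewrite /qform mulmx0 mxE.
by have := pdP x x0; rewrite ltcE => /andP[_ /ltW].
Qed.

Lemma stein_sol_posdef P : attractive M -> observable M CN -> hermt P = P ->
  stein M P = - (hermt CN *m CN) -> posdef P.
Proof.
move=> attrM obs hP sP; split=> // x x0.
have [j0 /eqP out0] : exists j0, CN *m M ^+ j0 *m x <> 0.
  by apply/existsNP => /obs x_eq0; rewrite x_eq0 eqxx in x0.
have s0 := sqnorm_gt0 out0; set s := sqnorm _ in s0.
have tail : vanishing (fun k => mxnorm (M ^+ k *m x) * (mxnorm P * mxnorm (M ^+ k *m x))).
  apply: vanishingM => [k||]; [exact: mxnorm_ge0 | exact: attrM |].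
  by apply: vanishingZ; [exact: mxnorm_ge0 | exact: attrM].
have [T hT] := tail _ s0; set K := maxn T j0.+1.
have sK : s <= \sum_(j < K) sqnorm (CN *m M ^+ j *m x).
  rewrite (bigD1 (Ordinal (leq_maxr T j0.+1))) //= lerDl.
  by apply: sumr_ge0 => j _; apply: sqnorm_ge0.
have remK := lerNnormlW (le_trans (Re_le_normc _) (normc_qform_le P (M ^+ K *m x))).
have := hT K (leq_maxl _ _).
rewrite ltcE /= (Im_qform x hP) eqxx /= -/(qform P x) (qform_telescope x K sP) raddfD /=.
by rewrite expr2 in remK; nra.
Qed.

Lemma stein_unique_posdef_sol : attractive M -> observable M CN ->
  exists! P, posdef P /\ stein M P = - (hermt CN *m CN).
Proof.
move=> attrM obs; have inj X := @attractive_stein_eq0 R n M X attrM.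
have [P sP] := stein_surj inj (- (hermt CN *m CN)).
have hP : hermt P = P.
  apply/eqP; rewrite -subr_eq0; apply/eqP/inj.
  by rewrite linearB /= stein_hermt sP raddfN /= hermtM hermtK subrr.
exists P; split; first by split; [apply: stein_sol_posdef | ].
move=> P' [_ sP']; apply/eqP; rewrite -subr_eq0; apply/eqP/inj.
by rewrite linearB /= sP sP' subrr.
Qed.

End Lyapunov.

Section ConverseLyapunov.
Variables (R : realType) (n q : nat) (M : 'M[R[i]]_n) (CN : 'M[R[i]]_(q, n)).
Local Notation C := R[i].
Implicit Types (P : 'M[C]_n) (x y : 'cV[C]_n).

Lemma observable_state_bound : observable M CN -> exists d, exists2 c, 0 <= c &
  forall y, mxnorm y <= c * \sum_(j < d) mxnorm (CN *m M ^+ j *m y).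
Proof.
move=> obs; have [d hd] := observable_horizon M CN; exists d.
pose O j := CN *m M ^+ j; pose W := \sum_(j < d) hermt (O j) *m O j.
have W_unit : W \in unitmx.
  apply: unitmx_of_row_inj => u; rewrite -[u]hermtK; set y := hermt u => yW0.
  suff -> : y = 0 by rewrite raddf0.
  have term j : (hermt y *m (hermt (O j) *m O j) *m y) 0 0 = (sqnorm (O j *m y))%:C.
    by rewrite -qform1 /qform mulmx1 hermtM !mulmxA.
  have : (hermt y *m W *m y) 0 0 = 0 by rewrite yW0 mul0mx mxE.
  rewrite mulmx_sumr mulmx_suml summxE; under eq_bigr => j _ do rewrite term.
  rewrite -rmorph_sum => -[] /(psumr_eq0P (fun j _ => sqnorm_ge0 _)) out0.
  by apply: obs => t; apply: hd => j jd; apply/sqnorm_eq0/(out0 (Ordinal jd)).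
exists (mxnorm (invmx W) * \sum_(j < d) mxnorm (O j)).
  by apply: mulr_ge0; [apply: mxnorm_ge0 | apply: sumr_ge0 => j _; apply: mxnorm_ge0].
move=> y; rewrite -mulrA -[y in mxnorm y](mulKmx W_unit).
apply: le_trans (mxnormM _ _) _; rewrite ler_wpM2l ?mxnorm_ge0 //.
rewrite mulmx_suml mulr_sumr; apply: le_trans (mxnorm_sum _) _.
apply: ler_sum => j _; rewrite -(mulmxA (hermt (O j))); apply: le_trans (mxnormM _ _) _.
rewrite mxnorm_hermt ler_wpM2r ?mxnorm_ge0 // (bigD1 j) //= lerDl.
by apply: sumr_ge0 => *; apply: mxnorm_ge0.
Qed.

Section PosdefSolution.
Variable P : 'M[C]_n.
Hypotheses (pdP : posdef P) (sP : stein M P = - (hermt CN *m CN)).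

Lemma stein_output_energy x K :
  \sum_(j < K) sqnorm (CN *m M ^+ j *m x) <= mxnorm x ^+ 2 * mxnorm P.
Proof.
have := le_trans (ler_norm _) (le_trans (Re_le_normc _) (normc_qform_le P x)).
rewrite (qform_telescope x K sP) raddfD /= => /(le_trans _); apply.
by rewrite lerDl posdef_Re_qform_ge0.
Qed.

Lemma stein_output_le x j :
  mxnorm (CN *m M ^+ j *m x) <= q%:R * ((1 + mxnorm P) * mxnorm x).
Proof.
have mP0 := mxnorm_ge0 P; have x0 := mxnorm_ge0 x.
apply: mxnorm_le_of_sqnorm; first by rewrite mulr_ge0 // addr_ge0.
apply: (@le_trans _ _ (mxnorm x ^+ 2 * mxnorm P)).
  apply: le_trans (stein_output_energy x j.+1); rewrite big_ord_recr /= lerDr.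
  by apply: sumr_ge0 => i _; apply: sqnorm_ge0.
by rewrite exprMn mulrC ler_wpM2r ?exprn_ge0 //; nra.
Qed.

Hypothesis obs : observable M CN.

Lemma output_shift x j k : CN *m M ^+ j *m (M ^+ k *m x) = CN *m M ^+ (j + k) *m x.
Proof. by rewrite exprD !mulmxA. Qed.

Lemma stein_posdef_bounded : exists2 c, 0 <= c &
  forall x k, mxnorm (M ^+ k *m x) <= c * mxnorm x.
Proof.
have [d [c c0 bound]] := observable_state_bound obs.
exists (c * (d%:R * q%:R * (1 + mxnorm P))).
  by rewrite !mulr_ge0 ?addr_ge0 ?mxnorm_ge0.
move=> x k; apply: le_trans (bound _) _; rewrite -mulrA ler_wpM2l //.
under eq_bigr => j _ do rewrite output_shift.
apply: le_trans (ler_sum _ (fun (j : 'I_d) _ => stein_output_le x (j + k))) _.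
by rewrite sumr_const card_ord -[_ *+ d]mulr_natl !mulrA lexx.
Qed.

Lemma stein_posdef_attractive : attractive M.
Proof.
move=> x; have [d [c c0 bound]] := observable_state_bound obs.
have outputs : vanishing (fun j => mxnorm (CN *m M ^+ j *m x)).
  apply/vanishing_mxnorm/(vanishing_series (fun j => sqnorm_ge0 _)).
  exact: stein_output_energy.
apply: (vanishing_le (fun k => bound (M ^+ k *m x))).
apply: vanishingZ => //.
apply: (vanishing_sum (u := fun j k => mxnorm (CN *m M ^+ j *m (M ^+ k *m x)))) => j _.
under [fun k => _]funext => k do rewrite output_shift.
exact: (vanishing_shift j outputs).
Qed.

End PosdefSolution.

End ConverseLyapunov.

Section AntilinearStability.
Variables (R : realType) (n : nat) (A : 'M[R[i]]_n).
Local Notation C := R[i].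
Local Notation M := (conjm A *m A).
Implicit Types (x : 'cV[C]_n).

Lemma antilin_traj_double x k : antilin_traj A x k.*2 = M ^+ k *m x.
Proof.
elim: k => [|k IHk]; first by rewrite expr0 mul1mx.
by rewrite doubleS /= IHk !conjmM !conjmK exprS -mulmxE !mulmxA.
Qed.

Lemma mxnorm_antilin_traj x t :
  mxnorm (antilin_traj A x t) <= (1 + mxnorm A) * mxnorm (M ^+ t./2 *m x).
Proof.
have A0 := mxnorm_ge0 A; have Mx0 := mxnorm_ge0 (M ^+ t./2 *m x).
rewrite -[t in antilin_traj _ _ t]odd_double_half; case: (odd t) => /=.
  rewrite add0n antilin_traj_double; apply: le_trans (mxnormM _ _) _.
  by rewrite !mxnorm_conjm ler_wpM2r // lerDr.
by rewrite add0n antilin_traj_double ler_peMl // lerDl.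
Qed.

Lemma antilin_asym_stable_attractive : antilin_asym_stable A -> attractive M.
Proof.
case=> _ attr x e e0; have e'0 : 0 < e / (n%:R + 1) by rewrite divr_gt0 ?ltr_wpDl.
have [T hT] := attr x _ e'0; exists T => k kT.
rewrite -antilin_traj_double; apply: le_lt_trans (mxnorm_cV_le (r := e / (n%:R + 1)) _) _.
  by move=> i; rewrite -lecR -norm_normc ltW // hT // (leq_trans kT) // -addnn leq_addr.
by rewrite mulrA ltr_pdivrMr ?ltr_wpDl //; nra.
Qed.

Lemma antilin_asym_stable_of_attractive :
  (exists2 c, 0 <= c & forall x k, mxnorm (M ^+ k *m x) <= c * mxnorm x) ->
  attractive M -> antilin_asym_stable A.
Proof.
move=> [c c0 bound] attrM; have A0 := mxnorm_ge0 A.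
have entry_le x t i :
    `|antilin_traj A x t i 0| <= ((1 + mxnorm A) * mxnorm (M ^+ t./2 *m x))%:C.
  by rewrite norm_normc lecR (le_trans (mxnorm_entry _ i 0)) // mxnorm_antilin_traj.
split=> [e e0|x e e0].
  set K := (1 + mxnorm A) * (c * n%:R).
  have K0 : 0 <= K by rewrite !mulr_ge0 // addr_ge0.
  have d0 : 0 < e / (K + 1) by rewrite divr_gt0 ?ltr_wpDl.
  exists (e / (K + 1)) => // x x_small t i.
  apply: le_lt_trans (entry_le x t i) _; rewrite ltcR.
  apply: (@le_lt_trans _ _ (K * (e / (K + 1)))).
    rewrite /K -!mulrA ler_wpM2l ?addr_ge0 //; apply: le_trans (bound x t./2) _.
    rewrite ler_wpM2l //; apply: mxnorm_cV_le => j.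
    by rewrite -lecR -norm_normc ltW.
  by rewrite mulrA ltr_pdivrMr ?ltr_wpDl //; nra.
have [T hT] := vanishingZ (addr_ge0 ler01 A0) (attrM x) e0.
exists T.*2 => t tT i; apply: le_lt_trans (entry_le x t i) _.
by rewrite ltcR hT // -(doubleK T) half_leq.
Qed.

Lemma antilin_asym_stable_of_stein q (Cm : 'M[C]_(q, n)) P : observable M Cm ->
  posdef P -> stein M P = - (hermt Cm *m Cm) -> antilin_asym_stable A.
Proof.
move=> obs pdP sP; apply: antilin_asym_stable_of_attractive.
  exact: stein_posdef_bounded pdP sP obs.
exact: stein_posdef_attractive pdP sP obs.
Qed.

Lemma antilin_asym_stable_stein q (Cm : 'M[C]_(q, n)) : observable M Cm ->
  antilin_asym_stable A <-> exists! P, posdef P /\ stein M P = - (hermt Cm *m Cm).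
Proof.
move=> obs; split=> [/antilin_asym_stable_attractive attrM | [P [[pdP sP] _]]].
  exact: stein_unique_posdef_sol.
exact: antilin_asym_stable_of_stein obs pdP sP.
Qed.

End AntilinearStability.

Section RealRepresentation.
Variable R : realType.
Local Notation C := R[i].

Definition realvec m k (z : 'M[C]_(m, k)) : 'M[R]_(m + m, k) := col_mx (reM z) (imM z).

Lemma realvec_eq0 m k (z : 'M[C]_(m, k)) : realvec z = 0 -> z = 0.
Proof.
move/eqP; rewrite col_mx_eq0 => /andP[/eqP/matrixP re0 /eqP/matrixP im0].
apply/matrixP => i j; move: (re0 i j) (im0 i j); rewrite !mxE.
by case: (z i j) => a b /= -> ->.
Qed.

Lemma realrep0_mul m p k (B : 'M[C]_(m, p)) (z : 'M[C]_(p, k)) :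
  realrep 0 B *m realvec z = realvec (conjm (B *m z)).
Proof.
rewrite /realrep /realvec add0r sub0r mul_block_col.
congr col_mx; apply/matrixP => i j; rewrite !mxE rmorph_sum raddf_sum -big_split;
  apply: eq_bigr => l _; rewrite !mxE.
  by case: (B i l) => a b; case: (z l j) => c d /=; ring.
by case: (B i l) => a b; case: (z l j) => c d /=; ring.
Qed.

End RealRepresentation.

Section AntilinearLyapunov.
Variables (R : realType) (n p : nat) (A : 'M[R[i]]_n) (C2 : 'M[R[i]]_(p, n)).
Local Notation C := R[i].
Local Notation M := (conjm A *m A).
Local Notation C2N := (col_mx C2 (conjm C2 *m A)).
Local Notation G := (hermt C2 *m C2).

Lemma realrep_antilin_traj x t :
  realrep 0 A ^+ t *m realvec x = realvec (antilin_traj A x t).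
Proof.
elim: t => [|t IHt]; first by rewrite expr0 mul1mx.
by rewrite exprS -mulmxE -mulmxA IHt realrep0_mul /= conjmM.
Qed.

Lemma antilin_observable_double : antilin_observable A C2 -> observable M C2N.
Proof.
move=> obs x out0; apply/realvec_eq0/obs => t.
rewrite -mulmxA realrep_antilin_traj realrep0_mul.
suff -> : C2 *m antilin_traj A x t = 0.
  by rewrite raddf0 /realvec /reM /imM !map_mx0 col_mx0.
have /eqP := out0 t./2; rewrite !mul_col_mx col_mx_eq0 => /andP[/eqP even0 /eqP odd0].
rewrite -[t]odd_double_half; case: (odd t) => /=; rewrite add0n antilin_traj_double.
  by rewrite -[C2]conjmK mulmxA -!conjmM !mulmxA odd0 raddf0.
by rewrite mulmxA even0.
Qed.

Definition antistein (X : 'M[C]_n) := hermt A *m conjm X *m A.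

Lemma antistein_is_zmod_morphism : zmod_morphism antistein.
Proof. by move=> X Y; rewrite /antistein raddfB mulmxBr mulmxBl. Qed.
HB.instance Definition _ :=
  GRing.isZmodMorphism.Build _ _ antistein antistein_is_zmod_morphism.

Lemma antistein_antistein X : antistein (antistein X) = hermt M *m X *m M.
Proof. by rewrite /antistein !conjmM conjmK hermtM conjm_hermt !mulmxA. Qed.

Lemma hermt_col_antistein : hermt C2N *m C2N = G + antistein G.
Proof. by rewrite hermt_col_mul /antistein conjmM hermtM conjm_hermt !mulmxA. Qed.

Lemma stein_antistein X : stein M X = antistein (antistein X - X) + (antistein X - X).
Proof. by rewrite /stein -antistein_antistein raddfB /= addrA subrK. Qed.

Lemma antistein_sol_stein P : antistein P - P = - G -> stein M P = - (hermt C2N *m C2N).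
Proof.
by move=> sP; rewrite stein_antistein sP hermt_col_antistein raddfN opprD addrC.
Qed.

Lemma stein_sol_antistein P : attractive M ->
  stein M P = - (hermt C2N *m C2N) -> antistein P - P = - G.
Proof.
move=> attrM; rewrite stein_antistein hermt_col_antistein => sP.
set E := antistein P - P + G.
have flipE : antistein E = - E.
  by apply/eqP; rewrite -addr_eq0 /E raddfD /= addrACA sP [antistein G + G]addrC addNr.
have : stein M E = 0.
  by rewrite /stein -antistein_antistein flipE raddfN /= flipE opprK subrr.
by move/(attractive_stein_eq0 attrM)/eqP; rewrite addr_eq0 => /eqP.
Qed.

End AntilinearLyapunov.

Theorem corollary5 (R : realType) (n p q : nat)
  (A2 : 'M[R[i]]_n) (C2 : 'M[R[i]]_(p, n)) (CN : 'M[R[i]]_(q, n))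
  (hobs2 : antilin_observable A2 C2)
  (hobsN : observable (conjm A2 *m A2) CN) :
  (antilin_asym_stable A2 <->
     exists! P1 : 'M[R[i]]_n, posdef P1 /\
       hermt A2 *m conjm P1 *m A2 - P1 = - (hermt C2 *m C2)) /\
  (antilin_asym_stable A2 <->
     exists! PN : 'M[R[i]]_n, posdef PN /\
       hermt (conjm A2 *m A2) *m PN *m (conjm A2 *m A2) - PN = - (hermt CN *m CN)) /\
  (antilin_asym_stable A2 ->
     forall P1 : 'M[R[i]]_n,
       hermt A2 *m conjm P1 *m A2 - P1 = - (hermt C2 *m C2) <->
       hermt (conjm A2 *m A2) *m P1 *m (conjm A2 *m A2) - P1 =
         - (hermt (col_mx C2 (conjm C2 *m A2)) *m col_mx C2 (conjm C2 *m A2))).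
Proof.
have obs2N := antilin_observable_double hobs2.
set M := conjm A2 *m A2 in hobsN obs2N *; set C2N := col_mx C2 _ in obs2N *.
have same_sols : antilin_asym_stable A2 -> forall P,
    antistein A2 P - P = - (hermt C2 *m C2) <-> stein M P = - (hermt C2N *m C2N).
  move=> /antilin_asym_stable_attractive attr P.
  by split; [apply: antistein_sol_stein | apply: stein_sol_antistein].
split; last by split; [exact: antilin_asym_stable_stein | exact: same_sols].
split=> [stab | [P [[pdP /antistein_sol_stein sP] _]]].
  have [P [[pdP sP] uniqP]] := (antilin_asym_stable_stein obs2N).1 stab.
  exists P; split=> [|P' [pdP' /(same_sols stab) sP']]; last exact: uniqP.
  by split; last exact/(same_sols stab).
exact: antilin_asym_stable_of_stein obs2N pdP sP.
Qed.
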